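(* Let $\mathcal{T}$ be an MPQ-tree of an interval graph $G$, and let $S_1,\dots,S_k$ be the sections of some Q-node of $\mathcal{T}$; set $S_0=S_{k+1}=\emptyset$. For every pair of indices $1\le a<b\le k$ with $(a,b)\neq(1,k)$ there exists a vertex $$v\in\big((S_{a-1}\cap S_a)\setminus S_b\big)\cup\big((S_b\cap S_{b+1})\setminus S_a\big).$$
   Context: An MPQ-tree of an interval graph $G=(V,E)$, $V=\{1,\dots,n\}$, is a rooted plane tree whose nodes are P-nodes and Q-nodes. Each P-node carries a (possibly empty) set of vertices. A Q-node has $k\ge 3$ ordered positions $1,\dots,k$; position $i$ carries a set $S_i\subseteq V$ (the $i$-th section) and a child subtree $T_i$, which may be empty. Every vertex $v$ is assigned to exactly one node $node(v)$: either $v$ lies in the set of the P-node $node(v)$, or $node(v)$ is a Q-node and $v$ lies exactly in the sections $S_{l(v)},\dots,S_{r(v)}$ of it, with $l(v)<r(v)$. For a node with child subtrees $T_1,\dots,T_k$, $V_i$ denotes the set of vertices assigned to nodes of $T_i$ ($V_i=\emptyset$ if $T_i$ is empty). The maximal cliques of $G$ are in bijection with the descending paths from the root which at a P-node continue into one of its children (stopping if there is none) and at a Q-node choose a position $i$ and continue into $T_i$ (stopping if $T_i$ is empty); the clique is the union of the sets of the visited P-nodes and the chosen sections. Reading these cliques left to right gives a linear order of the maximal cliques, and the orders obtained this way after arbitrarily permuting children of P-nodes and reversing the positions of Q-nodes are exactly the orders of the maximal cliques of $G$ in which the cliques containing any fixed vertex are consecutive. Moreover, for every Q-node with sections $S_1,\dots,S_k$: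 (a) $V_1\neq\emptyset$ and $V_k\ne\emptyset$; (b) $S_1\subseteq S_2$ and $S_k\subseteq S_{k-1}$; (c) $S_{i-1}\cap S_i\neq\emptyset$ for $2\le i\le k$; (d) $S_{i-1}\neq S_i$ for $2\le i\le k$; (e) $(S_i\cap S_{i+1})\setminus S_1\neq\emptyset$ and $(S_{i-1}\cap S_i)\setminus S_k\neq\emptyset$ for $2\le i\le k-1$; (f) $(S_{i-1}\cup V_{i-1})\setminus S_i\neq\emptyset$ and $(S_i\cup V_i)\setminus S_{i-1}\neq\emptyset$ for $2\le i\le k$; and further (g) no empty P-node has an empty P-node as its parent, (h) no P-node has exactly one child whose root is a P-node, (i) every child subtree of a P-node is nonempty. *)

From mathcomp Require Import all_boot.
Set Implicit Arguments. Unset Strict Implicit. Unset Printing Implicit Defensive.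

Section MPQ.
Variable T : finType.

(* A P-node carries a vertex set and the ordered list
   of its (nonempty) child subtrees; a Q-node carries its positions 1..k, each
   position being a pair (section S_i, child subtree T_i), where None stands for
   an empty child subtree. *)
Inductive mpq : Type :=
| PN of {set T} & seq mpq
| QN of seq ({set T} * option mpq).

Fixpoint nodes (t : mpq) : seq mpq :=
  t :: match t with
       | PN _ ch => (fix ns l := if l is c :: l' then nodes c ++ ns l' else [::]) ch
       | QN pos => (fix nq (l : seq ({set T} * option mpq)) :=
                      if l is p :: l' then
                        (if p.2 is Some c then nodes c else [::]) ++ nq l'
                      else [::]) pos
       end.

Fixpoint inP (A : Type) (x : A) (s : seq A) : Prop :=
  if s is y :: s' then x = y \/ inP x s' else False.

Definition node_set (u : mpq) : {set T} :=
  match u with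
  | PN X _ => X
  | QN pos => \bigcup_(p <- pos) p.1
  end.

Definition node_has (v : T) (u : mpq) : bool := v \in node_set u.

Definition verts (t : mpq) : {set T} := \bigcup_(u <- nodes t) node_set u.

Definition verts_opt (o : option mpq) : {set T} :=
  if o is Some c then verts c else set0.

(* 1-based sections / child-vertex sets of a Q-node, with S_0 = S_{k+1} = set0 *)
Definition sec (pos : seq ({set T} * option mpq)) (i : nat) : {set T} :=
  if i is j.+1 then nth set0 (map fst pos) j else set0.
Definition vch (pos : seq ({set T} * option mpq)) (i : nat) : {set T} :=
  if i is j.+1 then verts_opt (nth None (map snd pos) j) else set0.

Definition isP (u : mpq) : bool := if u is PN _ _ then true else false.

Definition node_ok (u : mpq) : Prop :=
  match u with
  | PN X ch =>
      (X = set0 -> forall c, inP c ch -> isP c -> node_set c <> set0) /\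
      ~ (exists c, ch = [:: c] /\ isP c)
      (* (i) holds by construction: children of P-nodes are trees *)
  | QN pos =>
      let k := size pos in
      let S := sec pos in
      let V := vch pos in
      3 <= k /\
      (* each vertex of the Q-node lies in consecutive sections l(v) < r(v) *)
      (forall v i j l, 1 <= i -> i < j -> j < l -> l <= k ->
          v \in S i -> v \in S l -> v \in S j) /\
      (forall v i, v \in S i -> (v \in S i.-1) || (v \in S i.+1)) /\
      V 1 != set0 /\ V k != set0 /\
      S 1 \subset S 2 /\ S k \subset S k.-1 /\
      (forall i, 2 <= i <= k -> S i.-1 :&: S i != set0) /\
      (* (d) *) (forall i, 2 <= i <= k -> S i.-1 != S i) /\
      (* (e) *) (forall i, 2 <= i <= k.-1 ->
                   ((S i :&: S i.+1) :\: S 1 != set0) /\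
                   ((S i.-1 :&: S i) :\: S k != set0)) /\
      (forall i, 2 <= i <= k ->
                   ((S i.-1 :|: V i.-1) :\: S i != set0) /\
                   ((S i :|: V i) :\: S i.-1 != set0))
  end.

Fixpoint cliques (t : mpq) : seq {set T} :=
  match t with
  | PN X ch =>
      if ch is [::] then [:: X] else
      (fix cs l := if l is c :: l' then map (setU X) (cliques c) ++ cs l' else [::]) ch
  | QN pos =>
      (fix cq (l : seq ({set T} * option mpq)) :=
         if l is p :: l' then
           (if p.2 is Some c then map (setU p.1) (cliques c) else [:: p.1]) ++ cq l'
         else [::]) pos
  end.

(* orderP t o : o is a left-to-right reading of the cliques of t after
   arbitrarily permuting children of P-nodes and reversing Q-nodes. *)
Fixpoint orderP (t : mpq) (o : seq {set T}) : Prop :=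
  match t with
  | PN X ch =>
      if ch is [::] then o = [:: X] else
      exists os : seq (seq {set T}),
        (fix cr (l : seq mpq) (s : seq (seq {set T})) : Prop :=
           match l, s with
           | [::], [::] => True
           | c :: l', o1 :: s' => orderP c o1 /\ cr l' s'
           | _, _ => False
           end) ch os /\
        exists os', perm_eq os os' /\ o = flatten (map (map (setU X)) os')
  | QN pos =>
      exists os : seq (seq {set T}),
        (fix cq (l : seq ({set T} * option mpq)) (s : seq (seq {set T})) : Prop :=
           match l, s with
           | [::], [::] => True
           | p :: l', o1 :: s' =>
               (if p.2 is Some c then exists oc, orderP c oc /\ o1 = map (setU p.1) oc
                else o1 = [:: p.1]) /\ cq l' s'
           | _, _ => False
           end) pos os /\
        (o = flatten os \/ o = flatten (rev os))
  end.

Definition simple_graph (adj : rel T) : Prop :=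
  (forall x, ~~ adj x x) /\ (forall x y, adj x y = adj y x).

Definition cliqueb (adj : rel T) (K : {set T}) : bool :=
  [forall x in K, forall y in K, (x != y) ==> adj x y].

Definition maxcliqueb (adj : rel T) (K : {set T}) : bool :=
  cliqueb adj K && [forall y, (y \notin K) ==> ~~ cliqueb adj (y |: K)].

Definition consec_clique_order (adj : rel T) (o : seq {set T}) : Prop :=
  uniq o /\ (forall K, (K \in o) = maxcliqueb adj K) /\
  (forall v i j l, i < j -> j < l -> l < size o ->
     v \in nth set0 o i -> v \in nth set0 o l -> v \in nth set0 o j).

Definition is_MPQ_tree (adj : rel T) (t : mpq) : Prop :=
  (forall v, count (node_has v) (nodes t) = 1) /\
  (forall u, inP u (nodes t) -> node_ok u) /\
  uniq (cliques t) /\ (forall K, (K \in cliques t) = maxcliqueb adj K) /\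
  (forall o, orderP t o <-> consec_clique_order adj o).

End MPQ.

From mathcomp Require Import all_boot zify.
Set Implicit Arguments. Unset Strict Implicit. Unset Printing Implicit Defensive.

(* Suppose no vertex of [S (a-1) :&: S a] misses [S b] and no vertex of
   [S b :&: S (b+1)] misses [S a].  Then a vertex lying in a section of the run
   [S a .. S b] and in a section outside it lies in the whole run, so reversing,
   in a consecutive clique order, the segment of cliques through the run yields
   another consecutive clique order, i.e. an order of the MPQ-tree.  Restricted
   to the Q-node, with repetitions collapsed, every order of the tree reads
   [S 1 .. S k] or its reverse, while the reversed order reads
   [S 1 .. S (a-1), S b .. S a, S (b+1) .. S k] or its reverse.  Both readings
   are impossible: by (d) and the consecutiveness of vertices no run of sections
   is a palindrome, and by (e) [S 1 <> S k], which settles [(a, b) <> (1, k)]. *)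

Fixpoint forall2 (A B : Type) (R : A -> B -> Prop) (s1 : seq A) (s2 : seq B) : Prop :=
  match s1, s2 with
  | [::], [::] => True
  | x :: s1', y :: s2' => R x y /\ forall2 R s1' s2'
  | _, _ => False
  end.

Lemma forall2_nth (A B : Type) (R : A -> B -> Prop) s1 s2 x0 y0 : forall2 R s1 s2 ->
  size s1 = size s2 /\ forall i, i < size s1 -> R (nth x0 s1 i) (nth y0 s2 i).
Proof.
elim: s1 s2 => [|x s1 IH] [|y s2] //= [Rxy /IH [-> Rs]]; split=> // -[|i] //=.
exact: Rs.
Qed.

Lemma inP_nth (A : Type) (x0 : A) s i : i < size s -> inP (nth x0 s i) s.
Proof. elim: s i => [|x s IH] [|i] //= Hi; [by left | right; exact: IH]. Qed.

Lemma inP_cat (A : Type) (x : A) s1 s2 : inP x (s1 ++ s2) <-> inP x s1 \/ inP x s2.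
Proof. by elim: s1 => [|y s1 IH] /=; [tauto | rewrite IH; tauto]. Qed.

Lemma inP_flatten_map (A B : Type) (f : A -> seq B) (x0 : A) y s :
  inP y (flatten (map f s)) -> exists2 i, i < size s & inP y (f (nth x0 s i)).
Proof.
elim: s => [|x s IH] //= /inP_cat [Hy|/IH [i Hi Hy]]; first by exists 0.
by exists i.+1.
Qed.

Lemma inP_flatten_mapI (A B : Type) (f : A -> seq B) x y s :
  inP x s -> inP y (f x) -> inP y (flatten (map f s)).
Proof.
elim: s => [|z s IH] //= [<- Hy|Hx Hy]; apply/inP_cat; [by left | right; exact: IH].
Qed.

Lemma sumn_nth_le s i : nth 0 s i <= sumn s.
Proof.
elim: s i => [|x s IH] [|i] //=; first exact: leq_addr.
exact: leq_trans (IH i) (leq_addl _ _).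
Qed.

Lemma sumn_nth2_le s i j : i != j -> nth 0 s i + nth 0 s j <= sumn s.
Proof.
wlog lt_ij : i j / i < j.
  move=> H ne_ij; case: (ltngtP i j) => [lt_ij|lt_ji|eq_ij]; first exact: H.
    by rewrite addnC; apply: H lt_ji _; rewrite eq_sym.
  by rewrite eq_ij eqxx in ne_ij.
move=> _; elim: s i j lt_ij => [|x s IH] [|i] [|j] //=; rewrite ?nth_nil //.
- by move=> _; rewrite leq_add2l sumn_nth_le.
- by rewrite ltnS => /IH le; apply: leq_trans le _; rewrite leq_addl.
Qed.

Lemma mem_take_nth (A : eqType) (x0 : A) s i x :
  x \in take i s -> exists2 j, j < i & x = nth x0 s j.
Proof.
case/(nthP x0)=> j; rewrite size_take_min leq_min => /andP [lt_ji _] <-.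
by exists j; rewrite ?nth_take.
Qed.

Lemma mem_drop_nth (A : eqType) (x0 : A) s i x :
  x \in drop i s -> exists2 j, i <= j & x = nth x0 s j.
Proof. by case/(nthP x0)=> j _ <-; exists (i + j); rewrite ?leq_addr ?nth_drop. Qed.

Lemma mem_flatten_rev (A : eqType) (x : A) ss : (x \in flatten (rev ss)) = (x \in flatten ss).
Proof. by apply/flattenP/flattenP=> -[l Hl Hx]; exists l; rewrite ?mem_rev in Hl *. Qed.

Definition orient (A : Type) (r : bool) (s : seq A) := if r then rev s else s.

Lemma orientK (A : Type) r (s : seq A) : orient r (orient r s) = s.
Proof. by case: r; rewrite /orient ?revK. Qed.

Lemma size_orient (A : Type) r (s : seq A) : size (orient r s) = size s.
Proof. by case: r; rewrite /orient ?size_rev. Qed.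

Lemma map_orient (A B : Type) (f : A -> B) r s : map f (orient r s) = orient r (map f s).
Proof. by case: r; rewrite /orient ?map_rev. Qed.

Lemma mem_orient (A : eqType) r (s : seq A) : orient r s =i s.
Proof. by case: r => // x; rewrite /orient mem_rev. Qed.

Lemma orient_cat3 (A : Type) r (s1 s2 s3 : seq A) :
  orient r (s1 ++ s2 ++ s3) =
  orient r (if r then s3 else s1) ++ orient r s2 ++ orient r (if r then s1 else s3).
Proof. by case: r; rewrite /orient ?rev_cat ?catA. Qed.

Lemma count_eq1 (A : Type) (x0 : A) (P : pred A) s i : i < size s -> P (nth x0 s i) ->
  (forall j, j < size s -> P (nth x0 s j) -> j = i) -> count P s = 1.
Proof.
elim: s i => [|x s IH] [|i] //= lt_i Pi uniq_i.
  rewrite Pi; congr _.+1; apply/eqP; rewrite -leqn0 leqNgt -has_count.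
  by apply/negP => /(has_nthP x0) [j lt_j /(uniq_i j.+1 lt_j)].
have /negbTE -> : ~~ P x by apply/negP => Px; have := uniq_i 0 isT Px.
apply: (IH i lt_i Pi) => j lt_j Pj.
by have [] := uniq_i j.+1 lt_j Pj.
Qed.

Lemma count_eq1_split (A : Type) (P : pred A) s : count P s = 1 ->
  exists s1 x s2, [/\ s = s1 ++ x :: s2, P x & ~~ has P (s1 ++ s2)].
Proof.
elim: s => [|x s IH] //=; case Px: (P x) => /=.
  case=> /eqP; rewrite -leqn0 leqNgt -has_count => nPs.
  by exists [::], x, s.
move=> /IH [s1 [y [s2 [-> Py nP]]]].
by exists (x :: s1), y, s2; rewrite /= Px.
Qed.

Lemma path_iota (R : rel nat) m n :
  (forall i, m <= i < m + n -> R i i.+1) -> path R m (iota m.+1 n).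
Proof.
elim: n m => [|n IH] m Rm //=; rewrite Rm ?leqnn ?addnS ?ltnS ?leq_addr //=.
by apply: IH => i /andP [lt_mi lt_i]; apply: Rm; rewrite ltnW //= addnS.
Qed.

Lemma iota_rcons m n : iota m n.+1 = rcons (iota m n) (m + n).
Proof. by rewrite -addn1 iotaD cats1. Qed.

Section Destutter.
Variable A : eqType.

Fixpoint destutter (s : seq A) : seq A :=
  if s is x :: s' then
    if s' is y :: _ then (if x == y then destutter s' else x :: destutter s') else [:: x]
  else [::].

Lemma destutter_nseq m x s : 0 < m -> destutter (nseq m x ++ s) = destutter (x :: s).
Proof.
case: m => // m _; elim: m => // m IH.
rewrite -[nseq _ _ ++ _]/(x :: (nseq m.+1 x ++ s)) -IH.
by rewrite -[nseq m.+1 x ++ s]/(x :: (nseq m x ++ s)) /= eqxx.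
Qed.

Lemma destutter_flatten_nseq (I : eqType) (m : I -> nat) (x : I -> A) s :
  {in s, forall i, 0 < m i} ->
  destutter (flatten [seq nseq (m i) (x i) | i <- s]) = destutter (map x s).
Proof.
suff: {in s, forall i, 0 < m i} ->
    destutter (flatten [seq nseq (m i) (x i) | i <- s]) = destutter (map x s) /\
    ohead (flatten [seq nseq (m i) (x i) | i <- s]) = ohead (map x s) by move=> H /H [].
elim: s => [|i s IH] //= m_gt0.
have [IH1 IH2] := IH (fun j sj => m_gt0 j (@mem_behead _ (i :: s) _ sj)).
have mi_gt0 := m_gt0 i (mem_head i s).
split; last by case: (m i) mi_gt0.
rewrite destutter_nseq //=.
case: (flatten _) (map x s) IH1 IH2 => [|y F] [|z M] //= -> [->] //.
Qed.

Lemma destutter_cons2 x y s : destutter (x :: y :: s) =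
  if x == y then destutter (y :: s) else x :: destutter (y :: s).
Proof. by []. Qed.

Lemma destutter_size_le s : size (destutter s) <= size s.
Proof.
elim: s => [|x [|y s] IH] //; rewrite destutter_cons2; case: ifP => _ //=.
exact: leqW.
Qed.

Lemma destutter_sizeE s : size s <= size (destutter s) -> destutter s = s.
Proof.
elim: s => [|x [|y s] IH] //; rewrite destutter_cons2; case: ifP => _.
  by move=> le; have := leq_trans le (destutter_size_le (y :: s)); rewrite ltnn.
by move=> le; rewrite IH.
Qed.

Lemma destutter_id s : sorted (fun x y => x != y) s -> destutter s = s.
Proof.
elim: s => [|x [|y s] IH] // /andP [/negbTE xy path_s].
by rewrite destutter_cons2 xy IH.
Qed.

End Destutter.

Definition convex (b : seq bool) := forall i j l, i < j -> j < l -> l < size b ->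
  nth false b i -> nth false b l -> nth false b j.

Lemma nth_nseq_cat x y (s : seq bool) t :
  nth false (nseq x false ++ s ++ nseq y false) t = (x <= t) && nth false s (t - x).
Proof.
rewrite nth_cat size_nseq; case: ltnP => Ht; first by rewrite nth_nseq Ht.
rewrite nth_cat; case: ltnP => H2 //.
by rewrite nth_nseq if_same nth_default.
Qed.

Lemma nth_rev_false (m : seq bool) u :
  nth false (rev m) u = (u < size m) && nth false m (size m - u.+1).
Proof. by case: ltnP => H; [rewrite nth_rev | rewrite nth_default // size_rev]. Qed.

(* The second hypothesis excludes the only obstruction: a run of ones crossing
   a border of the reversed segment without covering the whole segment. *)
Lemma convex_catrev p m q : convex (p ++ m ++ q) ->
  (has id m -> has id (p ++ q) -> all id m) -> convex (p ++ rev m ++ q).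
Proof.
move=> conv full_m.
have [Hm|/hasPn Hm] := boolP (has id m); last first.
  have /all_pred1P Em : all (pred1 false) m by apply/allP => b /Hm; case: b.
  by rewrite Em rev_nseq -Em.
have [Hpq|] := boolP (has id (p ++ q)).
  have /all_pred1P Em : all (pred1 true) m by apply: sub_all (full_m Hm Hpq) => b /= ->.
  by rewrite Em rev_nseq -Em.
rewrite has_cat negb_or => /andP [/hasPn Hp /hasPn Hq].
have /all_pred1P Ep : all (pred1 false) p by apply/allP => b /Hp; case: b.
have /all_pred1P Eq : all (pred1 false) q by apply/allP => b /Hq; case: b.
move: conv; rewrite Ep Eq; set x := size p; set y := size q => conv.
move=> i j l lt_ij lt_jl; rewrite !size_cat !size_nseq size_rev => lt_l.
rewrite !nth_nseq_cat !nth_rev_false.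
move=> /andP [le_xi /andP [lt_i mi]] /andP [le_xl /andP [lt_l' ml]].
have le_xj : x <= j by apply: leq_trans le_xi (ltnW lt_ij).
have lt_j : j - x < size m by lia.
rewrite le_xj lt_j /=.
have := conv (x + (size m - (l - x).+1)) (x + (size m - (j - x).+1)) (x + (size m - (i - x).+1)).
rewrite !nth_nseq_cat !size_cat !size_nseq !leq_addr /= !addKn; apply; try lia; done.
Qed.

Section Tree.
Variable T : finType.
Implicit Types (s c u : mpq T) (X : {set T}) (ch : seq (mpq T)).
Implicit Types (pos : seq ({set T} * option (mpq T))).

Lemma mpq_child_ind (P : mpq T -> Prop) :
  (forall X ch, (forall c, inP c ch -> P c) -> P (PN X ch)) ->
  (forall pos, (forall X c, inP (X, Some c) pos -> P c) -> P (QN pos)) ->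
  forall s, P s.
Proof.
move=> HP HQ; fix IH 1 => -[X ch|pos].
- apply: HP; elim: ch => [|c ch IHch] d /=; first by case.
  by case=> [->|]; [exact: IH | exact: IHch].
- apply: HQ; elim: pos => [|[Z oc] pos IHp] Y d /=; first by case.
  case=> [|]; last exact: IHp.
  case: oc => [c [_ ->]|E]; [exact: IH | discriminate E].
Qed.

Definition child_nodes (p : {set T} * option (mpq T)) :=
  if p.2 is Some c then nodes c else [::].

Lemma nodes_PN X ch : nodes (PN X ch) = PN X ch :: flatten (map (@nodes T) ch).
Proof. by rewrite /=; congr (_ :: _); elim: ch => //= c ch ->. Qed.

Lemma nodes_QN pos : nodes (QN pos) = QN pos :: flatten (map child_nodes pos).
Proof. by rewrite /=; congr (_ :: _); elim: pos => //= p pos ->. Qed.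

Lemma self_in_nodes s : inP s (nodes s).
Proof. by case: s => [X ch|pos]; rewrite ?nodes_PN ?nodes_QN; left. Qed.

Lemma PN_child_in_nodes X ch c : inP c ch -> inP c (nodes (PN X ch)).
Proof. by move=> Hc; rewrite nodes_PN; right; apply: inP_flatten_mapI Hc (self_in_nodes c). Qed.

Lemma QN_child_in_nodes pos X c : inP (X, Some c) pos -> inP c (nodes (QN pos)).
Proof.
move=> Hc; rewrite nodes_QN; right.
exact: (inP_flatten_mapI (x := (X, Some c))) Hc (self_in_nodes c).
Qed.

Lemma nodes_trans s c u : inP c (nodes s) -> inP u (nodes c) -> inP u (nodes s).
Proof.
elim/mpq_child_ind: s c => [X ch IH|pos IH] c.
- rewrite nodes_PN /= => -[->|/(@inP_flatten_map _ _ (@nodes T) (PN X ch) _ ch) [i Hi Hc]] Hu.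
    by rewrite nodes_PN in Hu.
  right; apply: (inP_flatten_mapI (x := nth (PN X ch) ch i)); first exact: inP_nth.
  exact: IH (inP_nth _ Hi) _ Hc Hu.
- rewrite nodes_QN /= => -[->|/(@inP_flatten_map _ _ child_nodes (set0, None) _ pos) [i Hi]] Hu.
    by rewrite nodes_QN in Hu.
  move: Hu; rewrite /child_nodes; case E: (nth (set0, None) pos i) => [Y [d|]] //= Hcd Hu.
  have Hd : inP (Y, Some d) pos by rewrite -E; exact: inP_nth.
  right; apply: (inP_flatten_mapI (x := (Y, Some d)) Hd).
  exact: IH _ _ Hd _ Hcd Hu.
Qed.

Definition all_node_ok s := forall u, inP u (nodes s) -> node_ok u.

Lemma all_node_ok_subtree s c : all_node_ok s -> inP c (nodes s) -> all_node_ok c.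
Proof. by move=> ok_s Hc u Hu; apply: ok_s; exact: nodes_trans Hc Hu. Qed.

(** * Occurrences of a vertex *)

Definition occ (v : T) s := count (node_has v) (nodes s).
Definition pos_occ (v : T) (p : {set T} * option (mpq T)) :=
  if p.2 is Some c then occ v c else 0.

Lemma in_bigcup_node_set (l : seq (mpq T)) v :
  (v \in \bigcup_(u <- l) node_set u) = (0 < count (node_has v) l).
Proof.
elim: l => [|u l IH]; first by rewrite big_nil in_set0.
by rewrite big_cons in_setU IH /= /node_has; case: (v \in node_set u).
Qed.

Lemma verts_occ v s : (v \in verts s) = (0 < occ v s).
Proof. exact: in_bigcup_node_set. Qed.

Lemma pos_occ_gt0 v p : (0 < pos_occ v p) = (v \in verts_opt p.2).
Proof. by case: p => Y [c|]; rewrite /pos_occ /verts_opt /= ?verts_occ ?in_set0. Qed.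

Lemma occ_PN v X ch : occ v (PN X ch) = (v \in X) + sumn (map (occ v) ch).
Proof. by rewrite /occ nodes_PN /= count_flatten -map_comp. Qed.

Lemma occ_QN v pos :
  occ v (QN pos) = (v \in node_set (QN pos)) + sumn (map (pos_occ v) pos).
Proof.
rewrite /occ nodes_QN /= count_flatten -map_comp; congr (_ + sumn _).
by apply: eq_map => -[Y [c|]].
Qed.

Lemma occ_subtree v u s : inP u (nodes s) -> occ v u <= occ v s.
Proof.
elim/mpq_child_ind: s u => [X ch IH|pos IH] u.
- rewrite nodes_PN /= => -[->//|/(@inP_flatten_map _ _ (@nodes T) (PN X ch) _ ch) [i Hi Hu]].
  rewrite occ_PN; apply: leq_trans (IH _ (inP_nth _ Hi) _ Hu) _.
  apply: leq_trans (leq_addl _ _).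
  by have := sumn_nth_le (map (occ v) ch) i; rewrite (nth_map (PN X ch)).
- rewrite nodes_QN /= => -[->//|/(@inP_flatten_map _ _ child_nodes (set0, None) _ pos) [i Hi]].
  rewrite occ_QN /child_nodes; case E: (nth _ pos i) => [Y [c|]] //= Hu.
  have Hc : inP (Y, Some c) pos by rewrite -E; exact: inP_nth.
  apply: leq_trans (IH _ _ Hc _ Hu) _; apply: leq_trans (leq_addl _ _).
  by have := sumn_nth_le (map (pos_occ v) pos) i; rewrite (nth_map (set0, None)) // E.
Qed.

Lemma verts_subtree u s : inP u (nodes s) -> verts u \subset verts s.
Proof.
by move=> Hu; apply/subsetP=> v; rewrite !verts_occ => /leq_trans; apply; exact: occ_subtree.
Qed.

Lemma node_set_verts s : node_set s \subset verts s.
Proof.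
apply/subsetP=> v Hv; rewrite verts_occ /occ.
by case: s Hv => [X ch|pos] Hv; rewrite ?nodes_PN ?nodes_QN /= /node_has Hv.
Qed.

Lemma section_node_set pos i : (nth (set0, None) pos i).1 \subset node_set (QN pos).
Proof.
elim: pos i => [|p pos IH] [|i] /=; rewrite ?big_nil ?big_cons ?sub0set ?subsetUl //.
exact: subset_trans (IH i) (subsetUr _ _).
Qed.

Lemma sec_nth pos j : sec pos j.+1 = (nth (set0, None) pos j).1.
Proof.
rewrite /sec; case: (ltnP j (size pos)) => H; first by rewrite (nth_map (set0, None)).
by rewrite !nth_default ?size_map.
Qed.

Lemma vch_nth pos j : vch pos j.+1 = verts_opt (nth (set0, None) pos j).2.
Proof.
rewrite /vch; case: (ltnP j (size pos)) => H; first by rewrite (nth_map (set0, None)).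
by rewrite !nth_default ?size_map.
Qed.

Definition disj (A B : {set T}) := forall v, v \in A -> v \in B -> False.

Lemma disjP (A B : {set T}) : reflect (disj A B) [disjoint A & B].
Proof.
apply: (iffP idP) => [dAB v vA vB | dAB]; first by rewrite (disjointFr dAB vA) in vB.
by rewrite -setI_eq0; apply/eqP/setP => v; rewrite !inE; apply/negP => /andP [/dAB].
Qed.

Lemma occ1_PN_disj X ch i : (forall v, occ v (PN X ch) <= 1) -> i < size ch ->
  disj X (verts (nth (PN X ch) ch i)) /\
  forall j, j < size ch -> j != i -> disj (verts (nth (PN X ch) ch j)) (verts (nth (PN X ch) ch i)).
Proof.
move=> occ1 Hi; split.
  move=> v Hv; rewrite verts_occ => Hc; have := occ1 v; rewrite occ_PN Hv.
  have := sumn_nth_le (map (occ v) ch) i; rewrite (nth_map (PN X ch)) //.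
  by move=> /(leq_trans Hc) H1; rewrite add1n ltnS leqNgt H1.
move=> j Hj Hji v; rewrite !verts_occ => H1 H2; have := occ1 v; rewrite occ_PN.
have := sumn_nth2_le (map (occ v) ch) Hji; rewrite !(nth_map (PN X ch)) //.
move=> /(leq_trans (leq_add H1 H2)) H3 H4.
by have := leq_trans H3 (leq_trans (leq_addl _ _) H4).
Qed.

Lemma occ1_QN_disj pos i Y c : (forall v, occ v (QN pos) <= 1) -> i < size pos ->
  nth (set0, None) pos i = (Y, Some c) ->
  disj (node_set (QN pos)) (verts c) /\
  forall j, j != i -> disj (vch pos j.+1) (verts c).
Proof.
move=> occ1 Hi E; split.
  move=> v Hv; rewrite verts_occ => Hc; have := occ1 v; rewrite occ_QN Hv.
  have := sumn_nth_le (map (pos_occ v) pos) i; rewrite (nth_map (set0, None)) // E /pos_occ /=.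
  by move=> /(leq_trans Hc) H1; rewrite add1n ltnS leqNgt H1.
move=> j Hji v; rewrite vch_nth -pos_occ_gt0 verts_occ => H1 H2; have := occ1 v; rewrite occ_QN.
have Hj : j < size pos.
  by rewrite ltnNge; apply/negP => Hj; move: H1; rewrite nth_default.
have H2' : 0 < pos_occ v (nth (set0, None) pos i) by rewrite E.
have := sumn_nth2_le (map (pos_occ v) pos) Hji; rewrite !(nth_map (set0, None)) //.
move=> /(leq_trans (leq_add H1 H2')) H3 H4.
by have := leq_trans H3 (leq_trans (leq_addl _ _) H4).
Qed.

End Tree.

(** * Clique orders of a tree *)

Section Orders.
Variable T : finType.
Implicit Types (s c : mpq T) (X : {set T}) (ch : seq (mpq T)) (o : seq {set T}).
Implicit Types (pos : seq ({set T} * option (mpq T))).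

(* Named copies of the anonymous fixpoints inside [orderP], so that they can be
   folded and related to [forall2]. *)
Fixpoint children_orders ch (os : seq (seq {set T})) : Prop :=
  match ch, os with
  | [::], [::] => True
  | c :: ch', o1 :: os' => orderP c o1 /\ children_orders ch' os'
  | _, _ => False
  end.

Definition position_order (p : {set T} * option (mpq T)) o :=
  if p.2 is Some c then exists oc, orderP c oc /\ o = map (setU p.1) oc
  else o = [:: p.1].

Fixpoint positions_orders pos (os : seq (seq {set T})) : Prop :=
  match pos, os with
  | [::], [::] => True
  | p :: pos', o1 :: os' =>
      (if p.2 is Some c then exists oc, orderP c oc /\ o1 = map (setU p.1) oc
       else o1 = [:: p.1]) /\ positions_orders pos' os'
  | _, _ => False
  end.

Lemma orderP_PN0 X o : orderP (PN X [::]) o <-> o = [:: X].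
Proof. by []. Qed.

Lemma orderP_PN X c ch o : orderP (PN X (c :: ch)) o <->
  exists os, forall2 (@orderP T) (c :: ch) os /\
    exists os', perm_eq os os' /\ o = flatten (map (map (setU X)) os').
Proof.
have children_ordersE ch' os : children_orders ch' os <-> forall2 (@orderP T) ch' os.
  by elim: ch' os => [|d ch' IH] [|o1 os] //=; rewrite IH.
have -> : orderP (PN X (c :: ch)) o = exists os, children_orders (c :: ch) os /\
    exists os', perm_eq os os' /\ o = flatten (map (map (setU X)) os') by [].
by split=> -[os [H1 H2]]; exists os; split=> //; apply/children_ordersE.
Qed.

Lemma orderP_QN pos o : orderP (QN pos) o <->
  exists os, forall2 position_order pos os /\ (o = flatten os \/ o = flatten (rev os)).
Proof.
have positions_ordersE pos' os : positions_orders pos' os <-> forall2 position_order pos' os.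
  by elim: pos' os => [|p pos' IH] [|o1 os] //=; rewrite IH.
have -> : orderP (QN pos) o =
  exists os, positions_orders pos os /\ (o = flatten os \/ o = flatten (rev os)) by [].
by split=> -[os [H1 H2]]; exists os; split=> //; apply/positions_ordersE.
Qed.

Lemma orderP_clique_verts s o K : orderP s o -> K \in o -> K \subset verts s.
Proof.
elim/mpq_child_ind: s o K => [X ch IH|pos IH] o K.
- case: ch IH => [|c ch] IH.
    by move=> /orderP_PN0 ->; rewrite inE => /eqP ->; exact: node_set_verts (PN X [::]).
  case/orderP_PN=> os [H1 [os' [Hp ->]]] /flattenP [l' /mapP [l Hl ->] /mapP [K1 HK1 ->]].
  rewrite subUset (node_set_verts (PN X (c :: ch))) /=.
  have Hl2 : l \in os by rewrite (perm_mem Hp).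
  have [Hs Hn] := forall2_nth (PN X [::]) [::] H1.
  have Hi : index l os < size (c :: ch) by rewrite Hs index_mem.
  have := Hn _ Hi; rewrite nth_index // => Ho.
  apply: subset_trans (IH _ (inP_nth _ Hi) _ _ Ho HK1) _.
  by apply: verts_subtree; apply: PN_child_in_nodes; exact: inP_nth.
- case/orderP_QN=> os [H1 Ho] HK.
  have {HK} : K \in flatten os by case: Ho HK => ->; rewrite ?mem_flatten_rev.
  case/flattenP=> l Hl HK.
  have [Hs Hn] := forall2_nth (set0, None) [::] H1.
  have Hi : index l os < size pos by rewrite Hs index_mem.
  have := Hn _ Hi; rewrite nth_index // /position_order.
  have Hsec := subset_trans (section_node_set pos (index l os)) (node_set_verts (QN pos)).
  case E: (nth _ pos _) Hsec => [Y [c|]] /= Hsec; last first.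
    by move=> El; move: HK; rewrite El inE => /eqP ->.
  case=> oc [Hoc El]; move: HK; rewrite El => /mapP [K1 HK1 ->].
  rewrite subUset Hsec /=.
  have Hc : inP (Y, Some c) pos by rewrite -E; exact: inP_nth.
  apply: subset_trans (IH _ _ Hc _ _ Hoc HK1) _.
  by apply: verts_subtree; exact: QN_child_in_nodes Hc.
Qed.

Lemma orderP_exists s : exists o, orderP s o.
Proof.
elim/mpq_child_ind: s => [X ch IH|pos IH].
- case: ch IH => [|c ch] IH; first by exists [:: X].
  have [os Hos] : exists os, forall2 (@orderP T) (c :: ch) os.
    elim: (c :: ch) IH => [|d l IHl] IH; first by exists [::].
    have [od Hd] := IH d (or_introl erefl).
    have [os Hos] := IHl (fun e He => IH e (or_intror He)).
    by exists (od :: os).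
  exists (flatten (map (map (setU X)) os)); apply/orderP_PN; exists os; split=> //.
  by exists os.
- have [os Hos] : exists os, forall2 position_order pos os.
    elim: pos IH => [|[Y oc] l IHl] IH; first by exists [::].
    have [os Hos] := IHl (fun X e He => IH X e (or_intror He)).
    case: oc IH => [c|] IH; last by exists ([:: Y] :: os).
    have [od Hd] := IH Y c (or_introl erefl).
    by exists (map (setU Y) od :: os); split=> //; exists od.
  by exists (flatten os); apply/orderP_QN; exists os; split=> //; left.
Qed.

Lemma orderP_nonempty s o : all_node_ok s -> orderP s o -> exists K, K \in o.
Proof.
elim/mpq_child_ind: s o => [X ch IH|pos IH] o ok_s.
- case: ch IH ok_s => [|c ch] IH ok_s; first by move=> /orderP_PN0 ->; exists X; rewrite inE.
  case/orderP_PN=> -[|oc os] [//= [Hoc _] [os' [Hp ->]]].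
  have Hc0 : inP c (c :: ch) by left.
  have [K HK] := IH c Hc0 oc (all_node_ok_subtree ok_s (PN_child_in_nodes X Hc0)) Hoc.
  exists (X :|: K); apply/flattenP; exists (map (setU X) oc); last exact: map_f.
  by apply: map_f; rewrite -(perm_mem Hp) mem_head.
- case/orderP_QN=> os [H1 Ho].
  have k_ge3 : 3 <= size pos by case: (ok_s _ (self_in_nodes _)).
  have [Hs Hn] := forall2_nth (set0, None) [::] H1.
  have Hi : 0 < size pos by apply: leq_trans k_ge3.
  have Hos : nth [::] os 0 \in os by rewrite mem_nth // -Hs.
  suff [K HK] : exists K, K \in nth [::] os 0.
    by exists K; case: Ho => ->; rewrite ?mem_flatten_rev; apply/flattenP; exists (nth [::] os 0).
  have := Hn _ Hi; rewrite /position_order.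
  case E: (nth _ pos 0) => [Y [c|]] /=; last by move=> ->; exists Y; rewrite inE.
  case=> oc [Hoc ->].
  have Hc : inP (Y, Some c) pos by rewrite -E; exact: inP_nth.
  have [K HK] := IH _ _ Hc oc (all_node_ok_subtree ok_s (QN_child_in_nodes Hc)) Hoc.
  by exists (Y :|: K); apply: map_f.
Qed.

End Orders.

Section OrderSplit.
Variable T : finType.
Implicit Types (X Y Z : {set T}) (ch : seq (mpq T)) (o : seq {set T}).
Implicit Types (pos : seq ({set T} * option (mpq T))).

(* Only one child's order can meet [Z], the children having disjoint vertex sets. *)
Lemma PN_order_split X ch os os' i Z :
  (forall v, occ v (PN X ch) <= 1) -> forall2 (@orderP T) ch os -> perm_eq os os' ->
  i < size ch -> Z \subset verts (nth (PN X ch) ch i) ->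
  has (fun K : {set T} => ~~ [disjoint K & Z]) (nth [::] os i) ->
  exists A B, flatten (map (map (setU X)) os') = A ++ map (setU X) (nth [::] os i) ++ B /\
              {in A ++ B, forall K, disj K Z}.
Proof.
move=> occ1 ch_os perm_os lt_i sub_Z meet_i.
set meets := has (fun K : {set T} => ~~ [disjoint K & Z]).
have [size_os nth_os] := forall2_nth (PN X ch) [::] ch_os.
have [dXi d_ch] := occ1_PN_disj occ1 lt_i.
have only_i j : j < size os -> meets (nth [::] os j) -> j = i.
  move=> lt_j /hasP [K HK]; rewrite -setI_eq0 => /set0Pn [v]; rewrite inE => /andP [vK vZ].
  case: (eqVneq j i) => // ne_ji; exfalso.
  have lt_j' : j < size ch by rewrite size_os.
  have := subsetP (orderP_clique_verts (nth_os j lt_j') HK) v vK.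
  by move/(d_ch j lt_j' ne_ji v); apply; exact: subsetP sub_Z v vZ.
have lt_i' : i < size os by rewrite -size_os.
have /count_eq1_split [A' [x [B' [Eos' meets_x nmeets]]]] : count meets os' = 1.
  by rewrite -(permP perm_os); exact: count_eq1 lt_i' meet_i only_i.
have Ex : x = nth [::] os i.
  have x_os : x \in os by rewrite (perm_mem perm_os) Eos' mem_cat mem_head orbT.
  have := only_i (index x os); rewrite index_mem nth_index // => /(_ x_os meets_x) <-.
  by rewrite nth_index.
exists (flatten (map (map (setU X)) A')), (flatten (map (map (setU X)) B')).
split; first by rewrite Eos' map_cat flatten_cat /= Ex.
move=> K; rewrite -flatten_cat -map_cat => /flattenP [_ /mapP [l Hl ->] /mapP [K1 K1l ->]] v.
rewrite inE => /orP [vX vZ|vK1 vZ].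
  exact: dXi v vX (subsetP sub_Z v vZ).
move/hasPn: nmeets => /(_ l Hl) /hasPn /(_ K1 K1l) /negPn /disjP dK1.
exact: dK1 v vK1 vZ.
Qed.

Lemma QN_order_split pos os i Y c oc Z o :
  (forall v, occ v (QN pos) <= 1) -> forall2 (@position_order T) pos os -> i < size pos ->
  nth (set0, None) pos i = (Y, Some c) -> nth [::] os i = map (setU Y) oc ->
  Z \subset verts c -> (o = flatten os \/ o = flatten (rev os)) ->
  exists A B, [/\ o = A ++ map (setU Y) oc ++ B, {in A ++ B, forall K, disj K Z} & disj Y Z].
Proof.
move=> occ1 pos_os lt_i Ei Eos_i sub_Z Eo.
have [size_os nth_os] := forall2_nth (set0, None) [::] pos_os.
have [dNc dV] := occ1_QN_disj occ1 lt_i Ei.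
have dN : disj (node_set (QN pos)) Z by move=> v vN /(subsetP sub_Z); exact: dNc v vN.
have other j K : j < size os -> j != i -> K \in nth [::] os j -> disj K Z.
  move=> lt_j ne_ji HK v vK /(subsetP sub_Z) vc.
  have lt_j' : j < size pos by rewrite size_os.
  have sec_j := section_node_set pos j.
  move: (nth_os j lt_j') (dV j ne_ji) sec_j; rewrite vch_nth /position_order.
  case: (nth (set0, None) pos j) => Y2 [c2|] /=; last first.
    by move=> Ej _ sec_j; move: HK vK; rewrite Ej inE => /eqP ->; move/(subsetP sec_j)/dNc; apply.
  move=> [oc2 [ord2 Ej]] dV2 sec_j; move: HK vK; rewrite Ej => /mapP [K1 HK1 ->].
  rewrite inE => /orP [/(subsetP sec_j) vN|vK1]; first exact: dNc v vN vc.
  exact: dV2 v (subsetP (orderP_clique_verts ord2 HK1) v vK1) vc.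
have lt_i' : i < size os by rewrite -size_os.
have dA K : K \in flatten (take i os) -> disj K Z.
  case/flattenP=> l /(mem_take_nth [::]) [j lt_ji ->]; apply: other.
    exact: ltn_trans lt_ji lt_i'.
  by rewrite ltn_eqF.
have dB K : K \in flatten (drop i.+1 os) -> disj K Z.
  case/flattenP=> l /(mem_drop_nth [::]) [j lt_ij ->].
  case: (ltnP j (size os)) => [lt_j|le_j]; last by rewrite nth_default.
  by apply: other lt_j _; rewrite gtn_eqF.
have dY : disj Y Z.
  by move=> v vY; apply: dN; move: (section_node_set pos i); rewrite Ei => /subsetP; apply.
have Eos : os = take i os ++ map (setU Y) oc :: drop i.+1 os.
  by rewrite -Eos_i -drop_nth ?cat_take_drop.
case: Eo => ->; [exists (flatten (take i os)), (flatten (drop i.+1 os))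
                | exists (flatten (rev (drop i.+1 os))), (flatten (rev (take i os)))].
- split=> //; first by rewrite {1}Eos flatten_cat.
  by move=> K; rewrite mem_cat => /orP [/dA|/dB].
- split=> //; first by rewrite {1}Eos rev_cat rev_cons cat_rcons flatten_cat.
  by move=> K; rewrite mem_cat !mem_flatten_rev => /orP [/dB|/dA].
Qed.

Definition consecutive o := forall v i j l, i < j -> j < l -> l < size o ->
  v \in nth set0 o i -> v \in nth set0 o l -> v \in nth set0 o j.

Lemma consecutive_convex o : consecutive o <-> forall v, convex [seq v \in K | K : {set T} <- o].
Proof.
split=> [cons v i j l lt_ij lt_jl | conv v i j l lt_ij lt_jl lt_l].
  by rewrite size_map => lt_l; rewrite !(nth_map set0) //; try lia; exact: cons.
by have := conv v i j l lt_ij lt_jl; rewrite size_map !(nth_map set0) //; try lia; apply.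
Qed.

Lemma consecutive_catrev P B Q : consecutive (P ++ B ++ Q) ->
  (forall v, has (fun K : {set T} => v \in K) B -> has (fun K : {set T} => v \in K) (P ++ Q) ->
             all (fun K : {set T} => v \in K) B) ->
  consecutive (P ++ rev B ++ Q).
Proof.
move=> /consecutive_convex conv run; apply/consecutive_convex => v.
rewrite !map_cat map_rev; apply: convex_catrev; first by rewrite -!map_cat; exact: conv.
by rewrite -map_cat !has_map all_map; exact: run.
Qed.

End OrderSplit.

(** * The cliques through a Q-node *)

Section QNode.
Variable T : finType.
Variable qp : seq ({set T} * option (mpq T)).
Notation k := (size qp).
Notation S := (sec qp).
Notation V := (vch qp).
Notation W := (verts (QN qp)).
Notation N := (node_set (QN qp)).

Lemma sec_nonempty j : node_ok (QN qp) -> 1 <= j <= k -> exists v, v \in S j.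
Proof.
case=> k_ge3 [_ [_ [_ [_ [_ [_ [meet _]]]]]]] /andP [j_ge1 j_le].
case: (ltnP 1 j) => [j_gt1|j_le1].
  have /set0Pn [v] := meet j (introT andP (conj j_gt1 j_le)).
  by rewrite inE => /andP [_ vj]; exists v.
have -> : j = 1 by apply/eqP; rewrite eqn_leq j_le1 j_ge1.
have /set0Pn [v] := meet 2 (introT andP (conj (leqnn 2) (ltnW k_ge3))).
by rewrite inE => /andP [v1 _]; exists v.
Qed.

(* The cliques [Ks] of an order that are built at position [j] of the Q-node. *)
Definition section_block (p : nat * seq {set T}) :=
  [/\ 1 <= p.1 <= k, exists K, K \in p.2 &
      forall K, K \in p.2 -> exists2 K', K = S p.1 :|: K' & K' \subset V p.1].

Definition blocks_cliques X (bs : seq (nat * seq {set T})) :=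
  map (setU X) (flatten (map snd bs)).

(* Apart from a prefix and a suffix avoiding the subtree [W] of the Q-node,
   [o] lists the blocks of all positions, forwards or backwards according to
   [r], every clique enlarged by a set [X] (contributed by the ancestors) that
   avoids [W]. *)
Variant Q_segment (o : seq {set T}) : Prop :=
  QSegment pre suf X (bs : seq (nat * seq {set T})) (r : bool) of
    o = pre ++ blocks_cliques X (orient r bs) ++ suf &
    map fst bs = iota 1 k & {in bs, forall p, section_block p} &
    {in pre ++ suf, forall K, disj K W} & disj X W.

Lemma Q_segment_self o : all_node_ok (QN qp) -> orderP (QN qp) o -> Q_segment o.
Proof.
move=> ok_Q /orderP_QN [os [qp_os Eo]].
have [size_os nth_os] := forall2_nth (set0, None) [::] qp_os.
set bs := zip (iota 1 k) os.
have Esnd : map snd bs = os by apply: unzip2_zip; rewrite size_iota size_os.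
have [r ->] : exists r, o = flatten (orient r os) by case: Eo => ->; [exists false | exists true].
exists [::] [::] set0 bs r.
- rewrite /blocks_cliques /= cats0 (eq_map (g := id)) ?map_id; last exact: set0U.
  by case: r; rewrite /orient ?map_rev Esnd.
- by apply: unzip1_zip; rewrite size_iota size_os.
- move=> p /(nthP (0, [::])) [j]; rewrite size_zip size_iota size_os minnn => lt_j <-.
  have lt_j' : j < k by rewrite size_os.
  rewrite nth_zip ?size_iota // nth_iota // add1n /section_block /= !(nth_map (set0, None)) //.
  move: (nth_os j lt_j'); rewrite /position_order.
  case E: (nth _ qp j) => [Y [c|]] /=; last first.
    move=> ->; split=> //; first by exists Y; rewrite inE.
    by move=> K; rewrite inE => /eqP ->; exists set0; rewrite ?setU0 ?sub0set.
  case=> oc [ord_c ->].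
  have Hc : inP (Y, Some c) qp by rewrite -E; exact: inP_nth.
  have [K HK] := orderP_nonempty (all_node_ok_subtree ok_Q (QN_child_in_nodes Hc)) ord_c.
  split=> //; first by exists (Y :|: K); apply: map_f.
  by move=> _ /mapP [K1 HK1 ->]; exists K1 => //; exact: orderP_clique_verts ord_c HK1.
- by [].
- by move=> v; rewrite in_set0.
Qed.

Lemma Q_segment_extend o Y A B : Q_segment o -> disj Y W ->
  {in A ++ B, forall K, disj K W} -> Q_segment (A ++ map (setU Y) o ++ B).
Proof.
case=> pre suf X bs r -> bs_lab bs_blk d_ps dX dY dAB.
exists (A ++ map (setU Y) pre) (map (setU Y) suf ++ B) (Y :|: X) bs r => //.
- rewrite !map_cat -!catA /blocks_cliques -map_comp; congr (_ ++ _ ++ _ ++ _).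
  by apply: eq_map => K /=; rewrite setUA.
- have dYK K : disj K W -> disj (Y :|: K) W.
    by move=> dK v; rewrite inE => /orP [/dY|/dK].
  move=> K; rewrite !mem_cat -orbA => /or3P [KA|/mapP [K1 K1p ->]|].
  + by apply: dAB; rewrite mem_cat KA.
  + by apply/dYK/d_ps; rewrite mem_cat K1p.
  case/orP => [/mapP [K1 K1s ->]|KB]; last by apply: dAB; rewrite mem_cat KB orbT.
  by apply/dYK/d_ps; rewrite mem_cat K1s orbT.
- by move=> v; rewrite inE => /orP [/dY|/dX].
Qed.

Lemma Q_segment_meets o : node_ok (QN qp) -> Q_segment o ->
  has (fun K : {set T} => ~~ [disjoint K & W]) o.
Proof.
move=> ok_Q [pre suf X bs r -> bs_lab bs_blk _ _].
have k_gt0 : 0 < k by case: ok_Q => k_ge3 _; apply: leq_trans k_ge3.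
have lt_0 : 0 < size bs by rewrite -(size_map fst) bs_lab size_iota.
have bs0 : nth (0, [::]) bs 0 \in bs by rewrite mem_nth.
have [lab0 [K K0] blk0] := bs_blk _ bs0.
have [K' EK _] := blk0 K K0.
have [v vS] := sec_nonempty ok_Q lab0.
apply/hasP; exists (X :|: K).
  rewrite !mem_cat /blocks_cliques; apply/orP; right; apply/orP; left.
  apply: map_f; apply/flattenP; exists (nth (0, [::]) bs 0).2 => //.
  by case: r; rewrite /orient ?map_rev ?mem_rev map_f.
rewrite -setI_eq0; apply/set0Pn; exists v; rewrite EK !inE vS orbT /=.
apply: (subsetP (node_set_verts (QN qp))); move: vS.
case: (nth _ bs 0).1 => [|j]; first by rewrite /sec in_set0.
by rewrite sec_nth; apply: (subsetP (section_node_set qp j)).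
Qed.

Lemma Q_segment_of_order s o : (forall v, occ v s <= 1) -> all_node_ok s ->
  inP (QN qp) (nodes s) -> orderP s o -> Q_segment o.
Proof.
elim/mpq_child_ind: s o => [X ch IH|pos IH] o occ1 ok_s.
- rewrite nodes_PN /= => -[//|/(@inP_flatten_map _ _ (@nodes T) (PN X ch) _ ch) [i lt_i Q_i]].
  case: ch IH occ1 ok_s lt_i Q_i => [//|c0 ch0]; set ch := c0 :: ch0 => IH occ1 ok_s lt_i Q_i.
  case/orderP_PN=> os [ch_os [os' [perm_os ->]]].
  have [_ nth_os] := forall2_nth (PN X ch) [::] ch_os.
  have ci := PN_child_in_nodes X (inP_nth (PN X ch) lt_i).
  have seg_i : Q_segment (nth [::] os i).
    apply: IH (inP_nth _ lt_i) _ _ (all_node_ok_subtree ok_s ci) Q_i (nth_os i lt_i).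
    by move=> v; apply: leq_trans (occ_subtree v ci) (occ1 v).
  have ok_Q : node_ok (QN qp) := ok_s _ (nodes_trans ci Q_i).
  have [A [B [-> dAB]]] := PN_order_split occ1 ch_os perm_os lt_i (verts_subtree Q_i)
    (Q_segment_meets ok_Q seg_i).
  apply: Q_segment_extend => //.
  have [dXi _] := occ1_PN_disj occ1 lt_i.
  by move=> v vX /(subsetP (verts_subtree Q_i)); exact: dXi v vX.
- rewrite nodes_QN /= => -[[Epos]|]; first by rewrite -Epos in ok_s *; exact: Q_segment_self.
  case/(@inP_flatten_map _ _ (@child_nodes T) (set0, None) _ pos)=> i lt_i.
  rewrite /child_nodes; case Ei: (nth (set0, None) pos i) => [Y [c|]] //= Q_c.
  case/orderP_QN=> os [pos_os Eo].
  have [_ nth_os] := forall2_nth (set0, None) [::] pos_os.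
  have Hc : inP (Y, Some c) pos by rewrite -Ei; exact: inP_nth.
  have ci := QN_child_in_nodes Hc.
  move: (nth_os i lt_i); rewrite /position_order Ei /= => -[oc [ord_c Eos_i]].
  have seg_c : Q_segment oc.
    apply: IH Hc _ _ (all_node_ok_subtree ok_s ci) Q_c ord_c.
    by move=> v; apply: leq_trans (occ_subtree v ci) (occ1 v).
  have [A [B [-> dAB dY]]] := QN_order_split occ1 pos_os lt_i Ei Eos_i (verts_subtree Q_c) Eo.
  exact: Q_segment_extend.
Qed.

Definition rev_blocks (bs : seq (nat * seq {set T})) := rev [seq (p.1, rev p.2) | p <- bs].

Lemma blocks_cliques_cat X bs1 bs2 :
  blocks_cliques X (bs1 ++ bs2) = blocks_cliques X bs1 ++ blocks_cliques X bs2.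
Proof. by rewrite /blocks_cliques map_cat flatten_cat map_cat. Qed.

Lemma blocks_cliques_rev_blocks r X bs :
  blocks_cliques X (orient r (rev_blocks bs)) = rev (blocks_cliques X (orient r bs)).
Proof.
rewrite /blocks_cliques -map_rev; congr map.
case: r; rewrite /orient /rev_blocks ?revK rev_flatten !map_rev -!map_comp //.
by rewrite revK.
Qed.

Lemma mem_blocks_cliques X bs K : K \in blocks_cliques X bs ->
  exists2 p, p \in bs & exists2 K0, K0 \in p.2 & K = X :|: K0.
Proof.
by case/mapP=> K0 /flattenP [_ /mapP [p p_bs ->] K0_p] ->; exists p => //; exists K0.
Qed.

Lemma mem_blocks_cliques_orient X r bs : blocks_cliques X (orient r bs) =i blocks_cliques X bs.
Proof.
move=> K; case: r => //; rewrite /blocks_cliques /orient map_rev.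
by apply/mapP/mapP => -[K0 K0s ->]; exists K0; rewrite ?mem_flatten_rev in K0s *.
Qed.

Lemma reverse_run_perm pre suf X r bA bM bC :
  perm_eq (pre ++ blocks_cliques X (orient r (bA ++ rev_blocks bM ++ bC)) ++ suf)
          (pre ++ blocks_cliques X (orient r (bA ++ bM ++ bC)) ++ suf).
Proof.
rewrite !orient_cat3 !blocks_cliques_cat blocks_cliques_rev_blocks.
by apply/permP => P; rewrite !count_cat count_rev.
Qed.

Definition sections := [seq S j | j <- iota 1 k].

Definition run_reversal a b := iota 1 a.-1 ++ rev (iota a (b - a.-1)) ++ iota b.+1 (k - b).

Lemma sections_split a b : 1 <= a <= b -> b <= k ->
  sections = map S (iota 1 a.-1 ++ iota a (b - a.-1) ++ iota b.+1 (k - b)).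
Proof.
move=> /andP [a_ge1 le_ab] b_le.
have Eb : b.+1 = a + (b - a.-1) by lia.
have Ea : a = 1 + a.-1 by lia.
have Ek : k = a.-1 + (b - a.-1 + (k - b)) by lia.
by rewrite /sections {1}Ek iotaD -Ea iotaD -Eb.
Qed.

Lemma section_block_rev_blocks bs : {in bs, forall p, section_block p} ->
  {in rev_blocks bs, forall p, section_block p}.
Proof.
move=> blk p; rewrite mem_rev => /mapP [q /blk [lab [K Kq] blkK] ->].
by split=> //= [|K']; [exists K; rewrite mem_rev | rewrite mem_rev; exact: blkK].
Qed.

Definition reverse_run a b (bs : seq (nat * seq {set T})) :=
  take a.-1 bs ++ rev_blocks (take (b - a.-1) (drop a.-1 bs)) ++ drop b bs.

Lemma run_blocks_labels (bs : seq (nat * seq {set T})) a b :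
  map fst bs = iota 1 k -> 1 <= a <= b -> b <= k ->
  let bA := take a.-1 bs in let bM := take (b - a.-1) (drop a.-1 bs) in let bC := drop b bs in
  [/\ bs = bA ++ bM ++ bC, map fst (reverse_run a b bs) = run_reversal a b,
      {in bM, forall p, a <= p.1 <= b} & {in bA ++ bC, forall p, ~~ (a <= p.1 <= b)}].
Proof.
move=> lab /andP [a_ge1 le_ab] b_le bA bM bC.
have labA : map fst bA = iota 1 a.-1 by rewrite map_take lab take_iota; congr iota; lia.
have labM : map fst bM = iota a (b - a.-1).
  by rewrite map_take map_drop lab drop_iota take_iota; congr iota; lia.
have labC : map fst bC = iota b.+1 (k - b) by rewrite map_drop lab drop_iota add1n.
split.
- rewrite -{1}(cat_take_drop a.-1 bs); congr (_ ++ _).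
  by rewrite -{1}(cat_take_drop (b - a.-1) (drop a.-1 bs)) drop_drop subnK //; lia.
- by rewrite !map_cat labA labC /rev_blocks map_rev -map_comp labM.
- by move=> [j Ks] /(map_f fst); rewrite labM mem_iota /=; lia.
move=> [j Ks]; rewrite mem_cat => /orP [] /(map_f fst); rewrite ?labA ?labC mem_iota /=; lia.
Qed.

Lemma sec_node_set j : S j \subset N.
Proof. by case: j => [|j]; [rewrite /sec sub0set | rewrite sec_nth; exact: section_node_set]. Qed.

Lemma sec_verts j : S j \subset W.
Proof. exact: subset_trans (sec_node_set j) (node_set_verts _). Qed.

Lemma vch_verts j : V j \subset W.
Proof.
case: j => [|j]; first by rewrite /vch sub0set.
rewrite vch_nth; case: (ltnP j k) => lt_j; last by rewrite nth_default //= sub0set.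
case E: (nth _ qp j) => [X [c|]]; last by rewrite sub0set.
by apply: verts_subtree; apply: (QN_child_in_nodes (X := X)); rewrite -E; exact: inP_nth.
Qed.

Lemma section_block_verts p K : section_block p -> K \in p.2 -> K \subset W.
Proof.
case=> _ _ blk /blk [K' -> sub_K']; rewrite subUset sec_verts /=.
exact: subset_trans sub_K' (vch_verts _).
Qed.

(* Restricted to [N], the clique orders of the tree become sequences of sections. *)
Definition trace o := [seq K :&: N | K <- o & K :&: N != set0].

Lemma trace_cat o1 o2 : trace (o1 ++ o2) = trace o1 ++ trace o2.
Proof. by rewrite /trace filter_cat map_cat. Qed.

Lemma trace_cons K o :
  trace (K :: o) = if K :&: N != set0 then K :&: N :: trace o else trace o.
Proof. by rewrite /trace /=; case: ifP. Qed.

Lemma trace_disj o : {in o, forall K, disj K W} -> trace o = [::].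
Proof.
elim: o => [|K o IH] // dW; rewrite trace_cons.
have -> : K :&: N != set0 = false.
  apply/negbTE/negPn/eqP/setP => v; rewrite !inE; apply/negP => /andP [vK vN].
  exact: dW K (mem_head _ _) v vK (subsetP (node_set_verts _) v vN).
by apply: IH => K1 K1o; apply: dW; rewrite inE K1o orbT.
Qed.

Section Trace.
Hypothesis occ1 : forall v, occ v (QN qp) <= 1.
Hypothesis ok_Q : node_ok (QN qp).

Lemma vch_disj j : disj N (V j) /\ forall j', j' != j -> disj (V j') (V j).
Proof.
case: j => [|j]; first by split=> [v _|j' _ v _]; rewrite /vch in_set0.
rewrite vch_nth; case: (ltnP j k) => lt_j; last first.
  by rewrite nth_default //; split=> [v _|j' _ v _]; rewrite in_set0.
case E: (nth _ qp j) => [X [c|]]; last by split=> [v _|j' _ v _]; rewrite /= in_set0.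
have [dN dV] := occ1_QN_disj occ1 lt_j E; split=> // -[|j'] ne_j'; last exact: dV.
by move=> v; rewrite /vch in_set0.
Qed.

Lemma trace_block X p : disj X W -> section_block p ->
  trace (map (setU X) p.2) = nseq (size p.2) (S p.1).
Proof.
case: p => j Ks dX [/= lab_j _ blk]; elim: Ks blk => [|K Ks IH] // blk /=.
have [K' EK sub_K'] := blk K (mem_head _ _).
have [v vS] := sec_nonempty ok_Q lab_j.
have EKN : (X :|: K) :&: N = S j.
  apply/setP => w; rewrite EK !inE.
  case wS: (w \in S j); first by rewrite orbT /= (subsetP (sec_node_set j) w wS).
  apply/negP => /andP [/orP [wX|wK'] wN].
    exact: dX w wX (subsetP (node_set_verts _) w wN).
  exact: (vch_disj j).1 w wN (subsetP sub_K' w wK').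
rewrite trace_cons EKN ifT; last by apply/set0Pn; exists v.
by rewrite IH // => K1 K1s; apply: blk; rewrite inE K1s orbT.
Qed.

Lemma destutter_trace pre suf X bs : disj X W ->
  {in bs, forall p, section_block p} -> {in pre ++ suf, forall K, disj K W} ->
  destutter (trace (pre ++ blocks_cliques X bs ++ suf)) = destutter [seq S p.1 | p <- bs].
Proof.
move=> dX bs_blk d_ps.
have d_pre : {in pre, forall K, disj K W} by move=> K K_pre; apply: d_ps; rewrite mem_cat K_pre.
have d_suf : {in suf, forall K, disj K W}.
  by move=> K K_suf; apply: d_ps; rewrite mem_cat K_suf orbT.
rewrite !trace_cat (trace_disj d_pre) (trace_disj d_suf) cats0.
rewrite /blocks_cliques map_flatten -map_comp.
have -> : trace (flatten [seq map (setU X) p.2 | p <- bs]) =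
          flatten [seq nseq (size p.2) (S p.1) | p <- bs].
  elim: bs bs_blk => [|p bs IH] //= bs_blk.
  rewrite trace_cat trace_block ?IH //; last exact: bs_blk (mem_head _ _).
  by move=> q q_bs; apply: bs_blk; rewrite inE q_bs orbT.
apply: destutter_flatten_nseq => p /bs_blk [_ [K K_p] _].
by case: p.2 K_p.
Qed.

Lemma sorted_sections : sorted (fun A B => A != B) sections.
Proof.
case: ok_Q => k_ge3 [_ [_ [_ [_ [_ [_ [_ [neq _]]]]]]]].
rewrite sorted_map; case: k k_ge3 neq => // k' _ neq /=.
by apply: path_iota => i /andP [i_ge1 lt_i]; apply: neq; rewrite /= ltnS i_ge1 -add1n.
Qed.

Lemma Q_segment_sections o : Q_segment o -> exists r, destutter (trace o) = orient r sections.
Proof.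
case=> pre suf X bs r -> bs_lab bs_blk d_ps dX; exists r.
rewrite destutter_trace // => [|p]; last by rewrite mem_orient; exact: bs_blk.
rewrite (map_comp S fst) !map_orient bs_lab; apply: destutter_id.
case: r => /=; rewrite ?rev_sorted; last exact: sorted_sections.
by apply: sub_sorted sorted_sections => A B; rewrite eq_sym.
Qed.

(* The innermost two or three sections of a palindromic run would contradict
   (d), respectively the consecutiveness of a vertex of the middle section. *)
Lemma sections_not_palindromic lo hi : 1 <= lo -> lo < hi -> hi <= k ->
  (forall j, lo <= j <= hi -> S (lo + hi - j) = S j) -> False.
Proof.
case: ok_Q => _ [cons [two_sides [_ [_ [_ [_ [_ [neq _]]]]]]]].
move: {2}(hi - lo) (leqnn (hi - lo)) => n.
elim: n lo hi => [|n IH] lo hi le_n lo_ge1 lt_lh hi_le pal.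
  lia.
case: (ltnP lo.+2 hi) => [lt_2|le_2].
  apply: (IH lo.+1 hi.-1); try lia.
  move=> j j_in; have := pal j; rewrite (_ : lo.+1 + hi.-1 - j = lo + hi - j); last lia.
  by apply; lia.
have Slo : S lo = S hi by rewrite -(pal lo) ?leqnn ?(ltnW lt_lh) //; congr S; lia.
case: (eqVneq hi lo.+1) => [Ehi|ne_hi].
  have /negP[] : S hi.-1 != S hi by apply: (neq hi); lia.
  by rewrite Ehi /= Slo Ehi.
have Ehi : hi = lo.+2 by lia.
subst hi.
have /negP[] : S lo.+1 != S lo.+2 by apply: (neq lo.+2); lia.
apply/eqP/setP => w; rewrite -Slo.
case w1: (w \in S lo.+1); case w0: (w \in S lo) => //.
- by have := two_sides w lo.+1 w1; rewrite -[lo.+1.-1]/lo -[lo.+1.+1]/lo.+2 -Slo w0.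
- have w2 : w \in S lo.+2 by rewrite -Slo.
  by have := cons w lo lo.+1 lo.+2 lo_ge1 (ltnSn _) (ltnSn _) hi_le w0 w2; rewrite w1.
Qed.

Lemma first_last_sections_neq : S 1 != S k.
Proof.
case: ok_Q => k_ge3 [_ [_ [_ [_ [_ [_ [_ [_ [e _]]]]]]]]].
have two_in : 1 < 2 <= k.-1 by lia.
apply/eqP => E; have /set0Pn [v] := (e 2 two_in).2.
by rewrite !inE -E => /andP [/negP nv1 /andP [v1 _]].
Qed.

Lemma run_reversal_neq_sections a b : 1 <= a < b -> b <= k ->
  map S (run_reversal a b) != sections.
Proof.
move=> /andP [a_ge1 lt_ab] b_le.
rewrite (@sections_split a b) //; last by rewrite a_ge1 ltnW.
apply/negP; rewrite /run_reversal !map_cat eqseq_cat ?size_map // => /andP [_].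
rewrite eqseq_cat ?size_map ?size_rev // => /andP [/eqP pal _].
apply: (@sections_not_palindromic a b) => // j /andP [le_aj le_jb].
set n := b - a.-1; have lt_i : j - a < n by rewrite /n; lia.
have := congr1 (nth set0 ^~ (j - a)) pal.
rewrite !(nth_map 0) ?size_rev ?size_iota // nth_rev ?size_iota // !nth_iota //; last first.
  by rewrite /n; lia.
have -> : a + (j - a) = j by lia.
by have -> : a + (n - (j - a).+1) = a + b - j by rewrite /n; lia.
Qed.

Lemma run_reversal_neq_rev_sections a b : 1 <= a < b -> b <= k -> (a, b) != (1, k) ->
  map S (run_reversal a b) != rev sections.
Proof.
move=> /andP [a_ge1 lt_ab] b_le ab_ne; apply/eqP => E.
have [k' Ek] : exists k', k = k'.+1 by exists k.-1; lia.
case: (ltnP 1 a) => [a_gt1|a_le1].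
  have [a' Ea] : exists a', a.-1 = a'.+1 by exists a.-2; lia.
  move: E; rewrite /run_reversal /sections Ea Ek (iota_rcons 1 k') map_rcons rev_rcons /= => -[E _].
  by move: first_last_sections_neq; rewrite Ek /sec /= E eqxx.
have Ea : a = 1 by lia.
have lt_bk : b < k by rewrite ltn_neqAle b_le andbT; move: ab_ne; rewrite Ea xpair_eqE eqxx.
have [m Em] : exists m, k - b = m.+1 by exists (k - b).-1; lia.
move: E; rewrite /run_reversal /sections Ea /= Em iota_rcons Ek /= rev_cons map_cat map_rcons.
rewrite -rcons_cat => /rcons_inj [_ E].
have E1k : S 1 = S (b.+1 + m) by exact/esym/E.
by move: first_last_sections_neq; rewrite E1k (_ : b.+1 + m = k) ?eqxx //; lia.
Qed.

Section Run.
Variables a b : nat.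
Hypotheses (a_ge1 : 1 <= a) (le_ab : a <= b) (b_le : b <= k).
Hypothesis stop_left : forall v, v \in S a.-1 -> v \in S a -> v \in S b.
Hypothesis stop_right : forall v, v \in S b -> v \in S b.+1 -> v \in S a.

Lemma section_run v j j' j2 : 1 <= j' <= k -> a <= j <= b -> ~~ (a <= j' <= b) ->
  v \in S j -> v \in S j' -> a <= j2 <= b -> v \in S j2.
Proof.
case: ok_Q => _ [cons _] j'_in j_in j'_out vj vj' j2_in.
have [va vb] : v \in S a /\ v \in S b.
  case: (ltnP j' a) => [lt_j'a|le_aj'].
  - have va1 : v \in S a.-1.
      case: (eqVneq j' a.-1) => [<-//|ne]; apply: (cons v j' a.-1 j); lia.
    have va : v \in S a.
      case: (eqVneq j a) => [<-//|ne]; apply: (cons v j' a j); lia.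
    by split=> //; exact: stop_left va1 va.
  - have vb1 : v \in S b.+1.
      case: (eqVneq j' b.+1) => [<-//|ne]; apply: (cons v j b.+1 j'); lia.
    have vb : v \in S b.
      case: (eqVneq j b) => [<-//|ne]; apply: (cons v j b j'); lia.
    by split=> //; exact: stop_right vb vb1.
case: (eqVneq j2 a) => [->//|ne_a]; case: (eqVneq j2 b) => [->//|ne_b].
apply: (cons v a j2 b); lia.
Qed.

Lemma block_run v p p1 p2 K K1 K2 :
  section_block p -> section_block p1 -> section_block p2 ->
  a <= p.1 <= b -> ~~ (a <= p1.1 <= b) -> a <= p2.1 <= b ->
  K \in p.2 -> K1 \in p1.2 -> K2 \in p2.2 -> v \in K -> v \in K1 -> v \in K2.
Proof.
case=> _ _ blk [lab1 _ blk1] [_ _ blk2] p_in p1_out p2_in /blk [K' -> sub_K']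
  /blk1 [K1' -> sub_K1'] /blk2 [K2' -> _].
rewrite !inE => /orP [vS|vK'] /orP [vS1|vK1']; apply/orP; left.
- exact: section_run lab1 p_in p1_out vS vS1 p2_in.
- by case: ((vch_disj p1.1).1 v (subsetP (sec_node_set _) v vS) (subsetP sub_K1' v vK1')).
- by case: ((vch_disj p.1).1 v (subsetP (sec_node_set _) v vS1) (subsetP sub_K' v vK')).
- have ne : p1.1 != p.1 by apply: contraNneq p1_out => ->.
  by case: ((vch_disj p.1).2 _ ne v (subsetP sub_K1' v vK1') (subsetP sub_K' v vK')).
Qed.

End Run.

Lemma reverse_run_consecutive a b pre suf X r bA bM bC :
  1 <= a -> a <= b -> b <= k ->
  (forall v, v \in S a.-1 -> v \in S a -> v \in S b) ->
  (forall v, v \in S b -> v \in S b.+1 -> v \in S a) ->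
  {in bA ++ bM ++ bC, forall p, section_block p} ->
  {in bM, forall p, a <= p.1 <= b} -> {in bA ++ bC, forall p, ~~ (a <= p.1 <= b)} ->
  {in pre ++ suf, forall K, disj K W} ->
  consecutive (pre ++ blocks_cliques X (orient r (bA ++ bM ++ bC)) ++ suf) ->
  consecutive (pre ++ blocks_cliques X (orient r (bA ++ rev_blocks bM ++ bC)) ++ suf).
Proof.
move=> a_ge1 le_ab b_le stop_l stop_r blk in_run out_run d_ps.
rewrite !orient_cat3 !blocks_cliques_cat blocks_cliques_rev_blocks.
set P := blocks_cliques X (orient r (if r then bC else bA)).
set Q := blocks_cliques X (orient r (if r then bA else bC)).
have Ecat Bl : pre ++ (P ++ Bl ++ Q) ++ suf = (pre ++ P) ++ Bl ++ (Q ++ suf) by rewrite -!catA.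
rewrite !Ecat => cons; apply: consecutive_catrev cons _ => v.
have PQ_out K1 : K1 \in P ++ Q ->
    exists2 p1, p1 \in bA ++ bC & exists2 K10, K10 \in p1.2 & K1 = X :|: K10.
  move=> K1PQ; have : K1 \in blocks_cliques X (bA ++ bC).
    move: K1PQ; rewrite blocks_cliques_cat !mem_cat /P /Q !mem_blocks_cliques_orient.
    by case: (r); rewrite // orbC.
  by case/mem_blocks_cliques=> p1 p1_out K1_p1; exists p1.
have blkM p : p \in bM -> section_block p by move=> pM; apply: blk; rewrite !mem_cat pM orbT.
have [vX|nvX] := boolP (v \in X).
  by move=> _ _; apply/allP => K2 /mem_blocks_cliques [p2 _ [K20 _ ->]]; rewrite inE vX.
move=> /hasP [K /mem_blocks_cliques [p]]; rewrite mem_orient => pM [K0 K0p ->].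
rewrite inE (negbTE nvX) /= => vK0.
have vW := subsetP (section_block_verts (blkM p pM) K0p) v vK0.
move=> /hasP [K1 K1_out vK1].
have {K1_out} : K1 \in P ++ Q.
  rewrite mem_cat; move: K1_out; rewrite !mem_cat -!orbA.
  case/or4P=> [K1pre|->//|->|K1suf]; rewrite ?orbT //; exfalso.
  - by apply: (d_ps K1 _ v vK1 vW); rewrite mem_cat K1pre.
  - by apply: (d_ps K1 _ v vK1 vW); rewrite mem_cat K1suf orbT.
case/PQ_out=> p1 p1_out [K10 K10p EK1]; move: vK1; rewrite EK1 inE (negbTE nvX) /= => vK10.
apply/allP => K2 /mem_blocks_cliques [p2]; rewrite mem_orient => p2M [K20 K20p ->].
rewrite inE; apply/orP; right.
apply: (block_run a_ge1 le_ab b_le stop_l stop_r (blkM p pM) _ (blkM p2 p2M) _ _ _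
  K0p K10p K20p vK0 vK10).
- by apply: blk; move: p1_out; rewrite !mem_cat => /orP [->|->]; rewrite ?orbT.
- exact: in_run.
- exact: out_run.
- exact: in_run.
Qed.

(* The reversed run is no palindrome, and [S 1 <> S k]. *)
Lemma reversed_run_trace pre suf X bs r r' a b :
  map fst bs = iota 1 k -> {in bs, forall p, section_block p} ->
  {in pre ++ suf, forall K, disj K W} -> disj X W ->
  1 <= a < b -> b <= k -> (a, b) != (1, k) ->
  destutter (trace (pre ++ blocks_cliques X (orient r (reverse_run a b bs)) ++ suf))
    != orient r' sections.
Proof.
move=> bs_lab bs_blk d_ps dX ab b_le ab_ne.
have le_ab : 1 <= a <= b by case/andP: ab => -> /ltnW.
have [_ lab' _ _] := run_blocks_labels bs_lab le_ab b_le.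
have blk' : {in orient r (reverse_run a b bs), forall p, section_block p}.
  move=> p; rewrite mem_orient !mem_cat => /or3P [pA|/section_block_rev_blocks pM|pC].
  - by apply: bs_blk; apply: mem_take pA.
  - by apply: pM => q /mem_take /mem_drop; exact: bs_blk.
  - by apply: bs_blk; apply: mem_drop pC.
rewrite destutter_trace // (map_comp S fst) !map_orient lab'.
apply/eqP => E.
have Ereading : orient r (map S (run_reversal a b)) = orient r' sections.
  rewrite -E; apply/esym/destutter_sizeE.
  by rewrite E !size_orient !size_map /run_reversal !size_cat size_rev !size_iota; lia.
have := run_reversal_neq_sections ab b_le; have := run_reversal_neq_rev_sections ab b_le ab_ne.
move: Ereading => /(congr1 (orient r)); rewrite orientK => ->.
by case: (r) (r') => -[]; rewrite /orient ?revK eqxx.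
Qed.

End Trace.

Lemma run_leaves_section (adj : rel T) t a b :
  is_MPQ_tree adj t -> inP (QN qp) (nodes t) -> 1 <= a < b -> b <= k -> (a, b) != (1, k) ->
  (forall v, v \in S a.-1 -> v \in S a -> v \in S b) ->
  (forall v, v \in S b -> v \in S b.+1 -> v \in S a) -> False.
Proof.
move=> [occ_t [ok_t [_ [_ orders_t]]]] Q_t ab b_le ab_ne stop_l stop_r.
have occ1_t v : occ v t <= 1 by rewrite /occ occ_t.
have occ1 v : occ v (QN qp) <= 1 := leq_trans (occ_subtree v Q_t) (occ1_t v).
have ok_Q := ok_t _ Q_t.
have [a_ge1 lt_ab] := andP ab.
have [o ord_o] := orderP_exists t.
have [uniq_o [max_o cons_o]] := (orders_t o).1 ord_o.
move: (Q_segment_of_order occ1_t ok_t Q_t ord_o) uniq_o max_o cons_o.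
case=> pre suf X bs r -> bs_lab bs_blk d_ps dX uniq_o max_o cons_o.
have le_ab : 1 <= a <= b by rewrite a_ge1 ltnW.
have [Ebs _ in_run out_run] := run_blocks_labels bs_lab le_ab b_le.
set o' := pre ++ blocks_cliques X (orient r (reverse_run a b bs)) ++ suf.
have perm_o' : perm_eq o' (pre ++ blocks_cliques X (orient r bs) ++ suf).
  by rewrite [in X in perm_eq _ X]Ebs; exact: reverse_run_perm.
have cons_o' : consec_clique_order adj o'.
  split; first by rewrite (perm_uniq perm_o').
  split; first by move=> K; rewrite (perm_mem perm_o') max_o.
  apply: (reverse_run_consecutive occ1 ok_Q a_ge1 (ltnW lt_ab) b_le stop_l stop_r _
    in_run out_run d_ps); by rewrite -Ebs.
have seg_o' := Q_segment_of_order occ1_t ok_t Q_t ((orders_t o').2 cons_o').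
have [r' E] := Q_segment_sections occ1 ok_Q seg_o'.
by move/eqP: (reversed_run_trace occ1 ok_Q r r' bs_lab bs_blk d_ps dX ab b_le ab_ne).
Qed.

End QNode.

Theorem mainTheorem13 (n : nat) (adj : rel 'I_n) (t : mpq 'I_n)
    (pos : seq ({set 'I_n} * option (mpq 'I_n))) (a b : nat) :
  simple_graph adj -> is_MPQ_tree adj t -> inP (QN pos) (nodes t) ->
  1 <= a -> a < b -> b <= size pos -> (a, b) <> (1, size pos) ->
  exists v : 'I_n,
    v \in ((sec pos a.-1 :&: sec pos a) :\: sec pos b)
          :|: ((sec pos b :&: sec pos b.+1) :\: sec pos a).
Proof.
move=> _ tree_t Q_t a_ge1 lt_ab b_le ab_ne.
have [|/set0Pn //] := eqVneq (((sec pos a.-1 :&: sec pos a) :\: sec pos b)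
                               :|: ((sec pos b :&: sec pos b.+1) :\: sec pos a)) set0.
move/setP=> empty; exfalso.
have ab : 1 <= a < b by rewrite a_ge1.
apply: (run_leaves_section tree_t Q_t ab b_le (introN eqP ab_ne)) => [v va1 va|v vb vb1].
- by apply/negPn/negP => nvb; have := empty v; rewrite !inE va1 va nvb.
- by apply/negPn/negP => nva; have := empty v; rewrite !inE vb vb1 nva orbT.
Qed.
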